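(* Let $m$ and $k$ be positive integers with $3\leq k\leq m/2$, and let $H$ be $\mathrm{Sym}(m)$ or $\mathrm{Alt}(m)$ acting on the set of $k$-element subsets of $\{1,\ldots,m\}$. If $H$ contains a permutation $g$ having at most four cycles in this action, then $m\leq 7$.
   Context: The number of cycles of a permutation is the number of orbits of the cyclic group it generates, fixed points included. Throughout this part of the paper it is assumed that $k\le m/2$. *)

From mathcomp Require Import all_boot all_fingroup all_solvable.
Set Implicit Arguments. Unset Strict Implicit. Unset Printing Implicit Defensive.
Local Open Scope group_scope.

(* The k-element subsets of {0,...,m-1} (standing for {1,...,m}). *)
Definition ksubsets (m k : nat) : {set {set 'I_m}} :=
  [set A : {set 'I_m} | #|A| == k].

(* Number of cycles of g in its action on k-subsets: the number of orbits of
   the cyclic group <[g]> acting on k-subsets via A |-> g @: A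
   (fixed points included). *)
Definition ncycles_ksub (m k : nat) (g : 'S_m) : nat :=
  #|[set orbit 'P^* <[g]> A | A in ksubsets m k]|.

(* Fix a cycle C of g, of length L.  Intersecting with C maps the <g>-orbits of
   k-subsets onto the <g>-orbits of their traces on C, and every a-subset of C is
   a trace as soon as a <= k <= a + (m - L).  On subsets of C the group <g> acts
   through a cyclic group of order L, so the a-subsets of C form at least
   C(L, a) / L orbits, and orbits of subsets of different sizes are distinct.
   When m >= 8 and L >= 4, summing over the attainable sizes already yields five
   orbits.  If all cycles have length at most 3 then g ^+ 6 = 1, so there are at
   least C(m, k) / 6 >= C(m, 3) / 6 > 4 orbits. *)

From mathcomp Require Import all_boot all_fingroup all_solvable zify.
Set Implicit Arguments. Unset Strict Implicit. Unset Printing Implicit Defensive.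

Lemma leq_bin_lower_half n a b : a <= b -> 2 * b <= n -> 'C(n, a) <= 'C(n, b).
Proof.
elim: b => [|b IHb]; first by rewrite leqn0 => /eqP ->.
rewrite leq_eqVlt => /predU1P [-> // | le_ab le_2bn].
apply: leq_trans (IHb le_ab _) _; first lia.
rewrite -(leq_pmul2l (ltn0Sn b)) mul_bin_left leq_mul2r.
by apply/orP; right; lia.
Qed.

Lemma leq_bin_middle n j a : j <= a <= n - j -> 'C(n, j) <= 'C(n, a).
Proof.
case/andP=> le_ja le_a_nj; have [le_2a_n | lt_n_2a] := leqP (2 * a) n.
  exact: leq_bin_lower_half.
rewrite -(@bin_sub n a); last lia.
apply: leq_bin_lower_half; lia.
Qed.

Lemma bin3_gt n : 7 <= n -> 4 * n < 'C(n, 3).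
Proof.
move=> le_7n; have := bin_ffact n 3; rewrite !ffactnSr ffactn0 mul1n subn0 -mulnA.
have : n * 30 <= n * ((n - 1) * (n - 2)).
  by rewrite leq_mul2l (@leq_mul 6 5) ?orbT //; lia.
rewrite -[3`!]/6; lia.
Qed.

Lemma sum_ceil_bin_ge5 (L : nat) (n : nat -> nat) :
  4 <= L <= 6 -> (forall a, 'C(L, a) <= L * n a) -> 5 <= \sum_(L - 4 <= a < 4) n a.
Proof.
move=> /andP [L4 L6] bin_le.
have := bin_le 0; have := bin_le 1; have := bin_le 2; have := bin_le 3.
have : L = 4 \/ L = 5 \/ L = 6 by lia.
case=> [->|[->|->]]; rewrite /index_iota;
  [rewrite subnn | rewrite -[5 - 4]/1 | rewrite -[6 - 4]/2];
  by rewrite /= !big_cons big_nil !binS !bin0 !bin0n /=; lia.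
Qed.

Lemma card_bigcup_seq_disjoint (I : eqType) (T : finType) (s : seq I) (F : I -> {set T}) :
  uniq s -> {in s &, forall i j, i != j -> [disjoint F i & F j]} ->
  #|\bigcup_(i <- s) F i| = \sum_(i <- s) #|F i|.
Proof.
elim: s => [|i s IHs] /=; first by rewrite !big_nil cards0.
case/andP=> i_notin_s uniq_s disjF.
have disj_s : {in s &, forall j l, j != l -> [disjoint F j & F l]}.
  by move=> j l js ls; apply: disjF; rewrite inE ?js ?ls orbT.
have disj_i : [disjoint F i & \bigcup_(j <- s) F j].
  rewrite big_seq; apply: (big_ind (fun B : {set T} => [disjoint F i & B]))
    => [|B D dB dD|j js].
  - by rewrite -setI_eq0 setI0.
  - by rewrite -setI_eq0 setIUr (disjoint_setI0 dB) (disjoint_setI0 dD) setU0.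
  apply: disjF; rewrite ?mem_head ?inE ?js ?orbT //.
  by apply: contraNneq i_notin_s => ->.
rewrite !big_cons -IHs //; apply/eqP; rewrite (leq_card_setU _ _).2 //.
Qed.

Local Open Scope group_scope.

Section CyclicOrbits.
Variables (aT : finGroupType) (rT : finType) (to : {action aT &-> rT}).

Lemma card_orbit_cycle_le (g : aT) n y :
  0 < n -> to y (g ^+ n) = y -> #|orbit to <[g]> y| <= n.
Proof.
move=> n_gt0 gn_fix_y.
have fix_mul q : to y (g ^+ (q * n)) = y.
  by elim: q => [|q IHq]; rewrite ?act1 // mulSn expgD actM gn_fix_y.
have card_powers : #|[set to y (g ^+ i) | i : 'I_n]| <= n.
  by rewrite (leq_trans (leq_imset_card _ _)) ?card_ord.
apply: leq_trans card_powers; apply/subset_leq_card/subsetP.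
move=> z /orbitP [h /cycleP [i ->] <-].
apply/imsetP; exists (Ordinal (ltn_pmod i n_gt0)) => //=.
by rewrite {1}(divn_eq i n) expgD actM fix_mul.
Qed.

Lemma card_le_mul_orbits (G : {group aT}) (F : {set rT}) t :
  {in F, forall y, #|orbit to G y| <= t} ->
  #|F| <= t * #|[set orbit to G y | y in F]|.
Proof.
move=> orbit_le_t; rewrite -sum1_card (partition_big_imset (orbit to G)) /=.
rewrite mulnC -sum_nat_const; apply: leq_sum => O /imsetP [y yF ->].
rewrite sum1dep_card; apply: leq_trans (orbit_le_t _ yF).
apply: subset_leq_card; apply/subsetP=> z; rewrite inE => /andP [_ /eqP <-].
exact: orbit_refl.
Qed.

End CyclicOrbits.

Definition set_orbits (T : finType) (g : {perm T}) (S : {set {set T}}) :=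
  [set orbit 'P^* <[g]> A | A in S].

Definition subsets_of_card (T : finType) (B : {set T}) (a : nat) :=
  [set A : {set T} | A \subset B & #|A| == a].

Lemma card_mem_setact_orbit (T : finType) (G : {group {perm T}}) (A B : {set T}) :
  B \in orbit 'P^* G A -> #|B| = #|A|.
Proof. by case/orbitP=> h _ <-; rewrite card_setact. Qed.

Lemma porbit_expg_fix (T : finType) (g : {perm T}) y n :
  #|porbit g y| %| n -> (g ^+ n) y = y.
Proof.
by case/dvdnP=> q ->; rewrite permX iterM iter_fix // iter_porbit.
Qed.

Section CycleTraces.
Variables (T : finType) (g : {perm T}) (x : T).
Local Notation C := (porbit g x).

Lemma setact_porbit h : h \in <[g]> -> 'P^* C h = C.
Proof.
move=> hg; apply: astabs_setact; apply: subsetP hg.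
by rewrite porbitE acts_orbit ?subsetT.
Qed.

Lemma orbit_setI_porbit A :
  orbit 'P^* <[g]> (A :&: C) = (fun B => B :&: C) @: orbit 'P^* <[g]> A.
Proof.
rewrite /orbit -imset_comp; apply: eq_in_imset => h hg /=.
by rewrite -{2}(setact_porbit hg) !setactE imsetI //; apply: in2W; apply: perm_inj.
Qed.

Lemma card_set_orbits_trace (S : {set {set T}}) :
  #|set_orbits g [set A :&: C | A in S]| <= #|set_orbits g S|.
Proof.
rewrite /set_orbits -imset_comp (eq_imset _ orbit_setI_porbit).
set trace := fun O : {set {set T}} => [set B :&: C | B in O].
by rewrite (imset_comp trace (orbit 'P^* <[g]>)) leq_imset_card.
Qed.

Lemma card_orbit_subset_porbit (P : {set T}) :
  P \subset C -> #|orbit 'P^* <[g]> P| <= #|C|.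
Proof.
move=> sPC; apply: card_orbit_cycle_le; first by rewrite lt0n card_porbit_neq0.
rewrite /= setactE -[RHS]imset_id; apply: eq_in_imset => y Py /=.
have /eqP porbit_y : porbit g y == C by rewrite eq_porbit_mem (subsetP sPC).
by apply: porbit_expg_fix; rewrite porbit_y.
Qed.

Lemma bin_le_mul_orbits a :
  'C(#|C|, a) <= #|C| * #|set_orbits g (subsets_of_card C a)|.
Proof.
rewrite -cards_draws; apply: card_le_mul_orbits => P.
by rewrite inE => /andP [sPC _]; apply: card_orbit_subset_porbit.
Qed.

Lemma subsets_of_card_trace a k : a <= k <= a + #|~: C| ->
  subsets_of_card C a \subset [set A :&: C | A in [set A : {set T} | #|A| == k]].
Proof.
case/andP=> le_ak le_k_aC; apply/subsetP=> P; rewrite inE => /andP [sPC /eqP cardP].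
have : 0 < #|subsets_of_card (~: C) (k - a)| by rewrite cards_draws bin_gt0 leq_subLR.
case/card_gt0P=> D; rewrite inE => /andP [sDC' /eqP cardD].
have disjPD : [disjoint P & D].
  by apply: disjointWl sPC _; rewrite disjoint_sym disjoints_subset.
apply/imsetP; exists (P :|: D).
  have /eqP cardPD : #|P :|: D| == #|P| + #|D| by rewrite (leq_card_setU P D).2.
  by rewrite inE cardPD cardP cardD subnKC.
have DC0 : D :&: C = set0 by apply/disjoint_setI0; rewrite disjoints_subset.
by rewrite setIUl (setIidPl sPC) DC0 setU0.
Qed.

Lemma sum_orbits_subsets_le k s :
  uniq s -> {in s, forall a, a <= k <= a + #|~: C|} ->
  \sum_(a <- s) #|set_orbits g (subsets_of_card C a)|
    <= #|set_orbits g [set A : {set T} | #|A| == k]|.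
Proof.
move=> uniq_s feasible; rewrite -card_bigcup_seq_disjoint //; last first.
  move=> a b _ _ neq_ab; apply/pred0P=> O /=; apply/negbTE; apply: contra neq_ab.
  case/andP=> /imsetP [P Pa ->] /imsetP [Q Qb eqO].
  have /card_mem_setact_orbit : Q \in orbit 'P^* <[g]> P by rewrite eqO orbit_refl.
  by move: Pa Qb; rewrite !inE => /andP [_ /eqP <-] /andP [_ /eqP <-] ->.
apply: leq_trans (card_set_orbits_trace _); apply: subset_leq_card.
set traces := set_orbits g _; rewrite big_seq.
apply: (big_ind (fun O : {set {set {set T}}} => O \subset traces))
  => [|O1 O2 sO1 sO2|a sa].
- exact: sub0set.
- by rewrite subUset sO1.
by apply: imsetS; apply: subsets_of_card_trace; apply: feasible.
Qed.

End CycleTraces.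

Lemma bin_le_mul_orbits_short_cycles (T : finType) (g : {perm T}) k :
  (forall y, #|porbit g y| <= 3) ->
  'C(#|T|, k) <= 6 * #|set_orbits g [set A : {set T} | #|A| == k]|.
Proof.
move=> short; have g6 : g ^+ 6 = 1.
  apply/permP=> y; rewrite perm1 porbit_expg_fix //.
  by have := short y; have := card_porbit_neq0 g y; case: #|_| => [|[|[|[|]]]].
rewrite -card_draws; apply: card_le_mul_orbits => A _.
by apply: card_orbit_cycle_le => //; rewrite g6 act1.
Qed.

Section KSubsetOrbits.
Variables (T : finType) (g : {perm T}) (k : nat).
Hypotheses (le_3k : 3 <= k) (le_2k_T : 2 * k <= #|T|) (lt_7_T : 7 < #|T|).
Local Notation N := #|set_orbits g [set A : {set T} | #|A| == k]|.

Lemma short_cycles_orbits_gt4 : (forall y, #|porbit g y| <= 3) -> 4 < N.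
Proof.
move=> short; have := bin_le_mul_orbits_short_cycles k short.
by have := leq_bin_lower_half le_3k le_2k_T; have := bin3_gt (ltnW lt_7_T); lia.
Qed.

Lemma midsize_cycle_orbits_gt4 x : 3 < #|porbit g x| <= 6 -> 4 < N.
Proof.
set C := porbit g x; set L := #|C| => L_4_6.
have card_C_cC : L + #|~: C| = #|T| := cardsC C.
(* Since k <= #|T| - 4, every size from L - 4 to 3 is attainable. *)
have feasible : {in index_iota (L - 4) 4, forall a, a <= k <= a + #|~: C|}.
  by move=> a; rewrite mem_index_iota => /andP [? ?]; apply/andP; split; lia.
apply: leq_trans (sum_orbits_subsets_le (iota_uniq _ _) feasible).
exact: sum_ceil_bin_ge5 L_4_6 (bin_le_mul_orbits g x).
Qed.

Lemma long_cycle_orbits_gt4 x : 6 < #|porbit g x| -> 4 < N.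
Proof.
set C := porbit g x; set L := #|C| => lt_6L.
have card_C_cC : L + #|~: C| = #|T| := cardsC C.
(* The least attainable size >= 3; it is at most L - 3 because 2 k <= #|T|. *)
pose a := maxn 3 (k + L - #|T|).
have feasible : {in [:: a], forall b, b <= k <= b + #|~: C|}.
  by move=> b; rewrite inE => /eqP ->; apply/andP; split; lia.
have := sum_orbits_subsets_le (isT : uniq [:: a]) feasible; rewrite big_seq1.
have L_gt0 : 0 < L by lia.
apply: leq_trans; rewrite -(ltn_pmul2l L_gt0).
have le_bin3a : 'C(L, 3) <= 'C(L, a) by apply: leq_bin_middle; apply/andP; split; lia.
have := bin_le_mul_orbits g x a; rewrite -/C -/L.
by have := bin3_gt lt_6L; lia.
Qed.

End KSubsetOrbits.

Theorem lemma3p2 (m k : nat) (H : {set 'S_m}) (g : 'S_m) :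
  (3 <= k)%N -> (2 * k <= m)%N ->
  (H = [set: 'S_m] \/ H = 'Alt_('I_m)) ->
  g \in H ->
  (ncycles_ksub k g <= 4)%N ->
  (m <= 7)%N.
Proof.
move=> le_3k le_2k_m _ _; apply: contraTT; rewrite -!ltnNge => lt_7m.
have le_2k_T : 2 * k <= #|'I_m| by rewrite card_ord.
have lt_7_T : 7 < #|'I_m| by rewrite card_ord.
have [short | [x long]] : (forall y, #|porbit g y| <= 3) \/ exists x, 3 < #|porbit g x|.
  case: (boolP [forall y, #|porbit g y| <= 3]) => [/forallP | /forallPn [y]]; first by left.
  by rewrite -ltnNge; right; exists y.
  exact: short_cycles_orbits_gt4 le_3k le_2k_T lt_7_T short.
have [le_L6 | lt_6L] := leqP #|porbit g x| 6.
  by apply: (@midsize_cycle_orbits_gt4 _ g k le_3k le_2k_T lt_7_T x); rewrite long.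
exact: long_cycle_orbits_gt4 le_3k le_2k_T lt_7_T x lt_6L.
Qed.
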